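(* Let $k\ge 2$, let $H$ be a digraph (possibly with loops), and let $D$ be an $H$-colored local out-tournament. If every directed cycle in $D$ has $H$-length at most $k-2$, then $D$ has a $(k,H)$-kernel.
   Context: All digraphs are finite. A local out-tournament is a digraph $D$ such that for every vertex $x$, the subdigraph induced by the out-neighbourhood $N^+(x)$ is a tournament (every two distinct vertices joined by exactly one arc). $D$ has no loops and comes with a map $\rho: A(D)\to V(H)$. For a walk $W=(x_0,\ldots,x_n)$ in $D$, there is an obstruction on $x_i$ if $(\rho(x_{i-1},x_i),\rho(x_i,x_{i+1})) \notin A(H)$; for an open walk this is considered at internal vertices $x_i$, $1\le i\le n-1$, for a closed walk (such as a cycle) at all $i\in\{0,\ldots,n-1\}$ with indices modulo $n$. $O_H(W)$ is the set of indices with an obstruction; the $H$-length is $l_H(W)=|O_H(W)|+1$ for open $W$ and $|O_H(W)|$ for closed $W$. A $(k,H)$-kernel ($k\ge2$) is a set $S\subseteq V(D)$ such that for every two distinct $u,v\in S$ every directed $uv$-path in $D$ has $H$-length at least $k$, and for every $x\in V(D)\setminus S$ there is a directed path from $x$ to a vertex of $S$ of $H$-length at most $k-1$. *)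

From mathcomp Require Import all_boot.
Set Implicit Arguments. Unset Strict Implicit. Unset Printing Implicit Defensive.

(* D : vertex type V (finite), arc relation a : rel V.
   H : vertex type W (finite), arc relation h : rel W (loops allowed).
   rho : V -> V -> W is the arc colouring (only its values on arcs matter). *)

Section Kernels.
Variables (V W : finType) (a : rel V) (h : rel W) (rho : V -> V -> W).

Fixpoint obs (x y : V) (s : seq V) : nat :=
  match s with
  | [::] => 0
  | z :: s' => (~~ h (rho x y) (rho y z)) + obs y z s'
  end.

Definition hlen_open (x : V) (p : seq V) : nat :=
  match p with
  | [::] => 0
  | y :: s => obs x y s
  end + 1.

(* H-length of the closed walk x0, x1, ..., x_{n-1}, x0 given by c = x0 :: s:
   obstructions counted at all n positions (indices mod n) *)
Definition hlen_cycle (c : seq V) : nat :=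
  match c with
  | [::] => 0
  | x0 :: s => obs (last x0 s) x0 (rcons s x0)
  end.

Definition dpath (x : V) (p : seq V) : bool := path a x p && uniq (x :: p).

Definition dcycle (c : seq V) : bool := [&& cycle a c, uniq c & 1 < size c].

Definition local_out_tournament : Prop :=
  forall x u v, a x u -> a x v -> u != v -> (a u v (+) a v u) = true.

Definition kH_kernel (k : nat) (S : {set V}) : Prop :=
  (forall u v, u \in S -> v \in S -> u != v ->
     forall p, dpath u p -> last u p = v -> k <= hlen_open u p)
  /\ (forall x, x \notin S ->
     exists p, [/\ dpath x p, last x p \in S & hlen_open x p <= k.-1]).

End Kernels.

From mathcomp Require Import all_boot zify.
From Stdlib Require Import Classical.

(* Write u ~> v when some directed u-v path has H-length at most k-1.  In a
   local out-tournament two distinct vertices that reach each other lie on a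
   common directed cycle: a cycle through u can be enlarged by one outside
   vertex at a time until it contains v.  The arc of that cycle from v to u has
   H-length at most (k-2)+1 = k-1, so u ~> v implies either that v reaches
   strictly fewer vertices than u or that v ~> u.  A relation in which every
   arc either lowers such a rank or is reversible has a kernel, built greedily
   by treating the vertices in order of increasing rank. *)

Set Implicit Arguments.
Unset Strict Implicit.
Unset Printing Implicit Defensive.

Section RankedKernel.
Variables (T : finType) (g : T -> T -> Prop) (r : T -> nat).
Hypothesis g_ranked : forall u v, g u v -> r v < r u \/ g v u.

Lemma kernel_within (B : {set T}) : exists2 S : {set T}, S \subset B &
  {in S &, forall u v, u != v -> ~ g u v} /\
  {in B :\: S, forall x, exists2 y, y \in S & g x y}.
Proof.
have [n] := ubnP #|B|; elim: n B => // n IH B; rewrite ltnS => leBn.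
have [->|[z0 z0B]] := set_0Vmem B.
  by exists set0; rewrite ?sub0set //; split=> x; rewrite !inE.
case: (@arg_maxnP _ z0 (fun y => y \in B) r z0B) => z zB zmax.
have [|S sSBz [S_indep S_abs]] := IH (B :\ z).
  by apply: leq_trans _ leBn; rewrite (cardsD1 z B) zB.
have sSB : S \subset B := subset_trans sSBz (subsetDl B [set z]).
have [[y yS gzy]|zNabs] := classic (exists2 y, y \in S & g z y).
  exists S => //; split=> // x; rewrite inE => /andP[xNS xB].
  have [<-|xz] := eqVneq z x; first by exists y.
  by apply: S_abs; rewrite !inE xNS xB eq_sym xz.
exists (z |: S); first by rewrite subUset sub1set zB.
have zS u : u \in S -> ~ g z u by move=> uS gzu; apply: zNabs; exists u.
have Sz u : u \in S -> ~ g u z.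
  move=> uS /g_ranked[|]; last exact: zS.
  by move=> /leq_trans/(_ (zmax u (subsetP sSB u uS))); rewrite ltnn.
split=> [u v|x].
  rewrite !inE => /predU1P[->|uS] /predU1P[->|vS]; rewrite ?eqxx //.
  - by move=> _; apply: zS.
  - by move=> _; apply: Sz.
  - exact: S_indep.
rewrite !inE negb_or => /andP[/andP[xz xNS] xB].
have [y yS gxy] : exists2 y, y \in S & g x y by apply: S_abs; rewrite !inE xNS xz xB.
by exists y; rewrite // inE yS orbT.
Qed.

Lemma ranked_kernel : exists S : {set T},
  {in S &, forall u v, u != v -> ~ g u v} /\
  (forall x, x \notin S -> exists2 y, y \in S & g x y).
Proof.
have [S _ [S_indep S_abs]] := kernel_within setT.
by exists S; split=> // x xNS; apply: S_abs; rewrite !inE xNS.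
Qed.

End RankedKernel.

Lemma card_connect_lt_or_connect (T : finType) (e : rel T) u v : connect e u v ->
  #|connect e v| < #|connect e u| \/ connect e v u.
Proof.
move=> euv; have sub : connect e v \subset connect e u.
  by apply/subsetP => y; apply: connect_trans.
have [|ge] := ltnP #|connect e v| #|connect e u|; [by left | right].
have eq_card : #|connect e v| = #|connect e u|.
  by apply/eqP; rewrite eqn_leq subset_leq_card.
have /subset_cardP/(_ sub)/(_ u) := eq_card.
by rewrite [u \in connect e u]connect0 => /idP.
Qed.

Lemma connect_uniq_path (T : finType) (e : rel T) x y : connect e x y ->
  exists2 p, path e x p & uniq (x :: p) /\ last x p = y.
Proof. by case/connectP=> p /shortenP[p' ep' Up' _ ->]; exists p'. Qed.

Lemma cycle_next_ind (T : finType) (c : seq T) (P : pred T) z0 :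
  uniq c -> z0 \in c -> P z0 -> {in c, forall z, P z -> P (next c z)} ->
  {in c, forall z, P z}.
Proof.
move=> Uc cz0 Pz0 Pnext z; rewrite -(fconnect_cycle (cycle_next Uc) cz0).
case/connectP=> p; elim: p z0 cz0 Pz0 => [|y p IH] x cx Px /=; first by move=> _ ->.
by case/andP=> /eqP <- np; apply: IH np; rewrite ?mem_next // Pnext.
Qed.

Section DirectedCycles.
Variables (V : finType) (a : rel V).

Lemma dcycle_rot i c : dcycle a (rot i c) = dcycle a c.
Proof. by rewrite /dcycle rot_cycle rot_uniq size_rot. Qed.

Lemma path_exit (c : seq V) u p : path a u p -> u \in c -> last u p \notin c ->
  exists z x, [/\ z \in c, x \notin c, a z x & connect a x (last u p)].
Proof.
elim: p u => [|x p IH] u /=; first by move=> _ ->.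
case/andP=> aux pxp uc; have [xc|xNc] := boolP (x \in c); first exact: IH.
by exists u, x; split=> //; apply/connectP; exists p.
Qed.

Lemma insert_path_dcycle c z p : dcycle a c -> z \in c ->
  path a z (rcons p (next c z)) -> uniq p -> {in p, forall y, y \notin c} ->
  exists c', [/\ dcycle a c', {subset c <= c'} & {subset p <= c'}].
Proof.
move=> dc zc pzp Up pNc; have /and3P[_ Uc _] := dc.
have [i s c_z] := rot_to zc.
have mem_c y : (y \in c) = (y \in z :: s) by rewrite -c_z mem_rot.
have next_z : next c z = next (z :: s) z by rewrite -c_z (next_rot i Uc).
move: dc; rewrite -(dcycle_rot i) c_z.
case: s c_z mem_c next_z => [|w s] c_z mem_c next_z; first by case/and3P.
rewrite next_z /= eqxx rcons_path in pzp.
case/and3P=> cyc Uzs _; case/andP: pzp => pzp azw.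
exists (z :: p ++ w :: s); split.
- apply/and3P; split; last by rewrite /= size_cat addnS.
    by rewrite /cycle rcons_cat cat_path pzp /= azw; case/andP: cyc.
  rewrite cons_uniq in Uzs; case/andP: Uzs => zNws Uws.
  rewrite /= mem_cat cat_uniq Up negb_or zNws Uws !andbT; apply/andP; split.
    by apply: contraTN zc => /pNc.
  by apply/hasPn => y ys; apply: contraTN (ys) => /pNc; rewrite mem_c inE ys orbT.
- by move=> y; rewrite mem_c !inE mem_cat inE => /or3P[] ->; rewrite ?orbT.
- by move=> y yp; rewrite inE mem_cat yp orbT.
Qed.

Hypothesis a_irr : irreflexive a.

Lemma dcycle_through_arc u w : a u w -> connect a w u ->
  exists2 c, dcycle a c & u \in c.
Proof.
move=> auw /connect_uniq_path[p pwp [Up lp]].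
exists (w :: p); last by rewrite -lp mem_last.
apply/and3P; split=> //; first by rewrite /cycle rcons_path pwp lp auw.
by case: p {pwp Up} lp => //= wu; move: auw; rewrite wu a_irr.
Qed.

Hypothesis a_lot : local_out_tournament a.

Lemma extend_dcycle c x y z : dcycle a c -> z \in c -> a z x -> x \notin c ->
  y \in c -> connect a x y ->
  exists c', [/\ dcycle a c', {subset c <= c'} & x \in c'].
Proof.
move=> dc zc azx xNc yc cxy; have /and3P[cyc Uc _] := dc.
suff [z' [p [z'c pz'p Up pNc xp]]] : exists z' p, [/\ z' \in c,
    path a z' (rcons p (next c z')), uniq p, {in p, forall y, y \notin c} & x \in p].
  have [c' [dc' sub_c sub_p]] := insert_path_dcycle dc z'c pz'p Up pNc.
  by exists c'; split=> //; apply: sub_p.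
have [/hasP[z' z'c /andP[az'x axn]]|/hasPn noinsert] :=
  boolP (has (fun z => a z x && a x (next c z)) c).
  exists z', [:: x]; split=> //=; last exact: mem_head.
  - by rewrite az'x axn.
  - by move=> y'; rewrite inE => /eqP ->.
(* No arc z -> x is followed by x -> next z, so the tournament on N+(z) gives
   next z -> x: all of c dominates x. *)
have dom : {in c, forall z, a z x}.
  apply: (cycle_next_ind Uc zc azx) => z' z'c az'x.
  have nx : next c z' != x by apply: contraNneq xNc => <-; rewrite mem_next.
  have := a_lot (next_cycle cyc z'c) az'x nx.
  by move: (noinsert z' z'c); rewrite /= az'x /= => /negbTE ->; rewrite addbF.
have [p pxp [Up lp]] := connect_uniq_path cxy.
have has_c : has (mem c) p.
  move: yc; rewrite -lp; case: p {pxp Up lp} => [|w p] lc.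
    by move: lc; rewrite /= (negbTE xNc).
  by apply/hasP; exists (last w p) => //; apply: mem_last.
case/split_find: has_c pxp Up => y' q r y'c qNc pxp Up.
exists (prev c y'), (x :: q); split.
- by rewrite mem_prev.
- rewrite (next_prev Uc) /= dom ?mem_prev //.
  by move: pxp; rewrite cat_path => /andP[].
- by move: Up; rewrite -cat_cons -rcons_cons cat_uniq rcons_uniq => /and3P[/andP[]].
- by move=> y0; rewrite inE => /predU1P[-> //|]; apply/hasPn.
- exact: mem_head.
Qed.

Lemma dcycle_through u v : u != v -> connect a u v -> connect a v u ->
  exists c, [/\ dcycle a c, u \in c & v \in c].
Proof.
move=> uv cuv cvu.
have [c dc uc] : exists2 c, dcycle a c & u \in c.
  case/connectP: (cuv) => [[|w p]] /=; first by move=> _ vu; rewrite vu eqxx in uv.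
  case/andP=> auw pwp lp; apply: dcycle_through_arc auw _.
  by apply: connect_trans cvu; apply/connectP; exists p.
have [n] := ubnP (#|V| - size c); elim: n c dc uc => // n IH c dc uc lecn.
have [vc|vNc] := boolP (v \in c); first by exists c.
have [p pup lp] := connectP cuv; rewrite lp in vNc.
have [z [x [zc xNc azx cxv]]] := path_exit pup uc vNc; rewrite -lp in cxv.
have [c' [dc' sub xc']] := extend_dcycle dc zc azx xNc uc (connect_trans cxv cvu).
have /and3P[_ Uc _] := dc; have /and3P[_ Uc' _] := dc'.
have grows : size c < size c'.
  apply: (@uniq_leq_size _ (x :: c)) => [|y]; first by rewrite /= xNc Uc.
  by rewrite inE => /predU1P[->|/sub].
have bounded : size c' <= #|V| by rewrite -(card_uniqP Uc') max_card.
have shrinks : #|V| - size c' < n by move: lecn grows bounded; clear; lia.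
exact: IH dc' (sub u uc) shrinks.
Qed.

End DirectedCycles.

Section HLength.
Variables (V W : finType) (a : rel V) (h : rel W) (rho : V -> V -> W).

Lemma leq_obs_cat x y s t : obs h rho x y s <= obs h rho x y (s ++ t).
Proof. by elim: s x y => //= z s IH x y; rewrite leq_add2l. Qed.

Lemma hlen_open_cycle_prefix x p r :
  hlen_open h rho x p <= (hlen_cycle h rho (x :: p ++ r)).+1.
Proof.
case: p => [|y p] //; rewrite /hlen_open /hlen_cycle addn1 ltnS /= rcons_cat.
exact: leq_trans (leq_obs_cat _ _ _ _) (leq_addl _ _).
Qed.

Lemma dcycle_hpath B c u v :
  (forall c, dcycle a c -> hlen_cycle h rho c <= B) ->
  dcycle a c -> u \in c -> v \in c -> u != v ->
  exists p, [/\ dpath a v p, last v p = u & hlen_open h rho v p <= B.+1].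
Proof.
move=> cycB dc uc vc uv; have [i s c_v] := rot_to vc.
have dvs : dcycle a (v :: s) by rewrite -c_v dcycle_rot.
have us : u \in s by move: uc; rewrite -(mem_rot i) c_v inE (negbTE uv).
case/splitPr: us dvs => s1 s2; rewrite -cat_rcons => dvs.
exists (rcons s1 u); split; first last.
- by apply: leq_trans (hlen_open_cycle_prefix _ _ s2) _; rewrite ltnS cycB.
- by rewrite last_rcons.
case/and3P: dvs => cyc U _; apply/andP; split.
  by move: cyc; rewrite /cycle rcons_cat cat_path => /andP[].
by move: U; rewrite -cat_cons cat_uniq => /andP[].
Qed.

End HLength.

Theorem theorem28 (V W : finType) (a : rel V) (h : rel W) (rho : V -> V -> W)
    (k : nat) :
  2 <= k ->
  irreflexive a ->
  local_out_tournament a ->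
  (forall c : seq V, dcycle a c -> hlen_cycle h rho c <= k - 2) ->
  exists S : {set V}, kH_kernel a h rho k S.
Proof.
move=> k2 a_irr a_lot cycB.
pose g u v := exists p, [/\ dpath a u p, last u p = v & hlen_open h rho u p <= k.-1].
have g_connect u v : g u v -> connect a u v.
  by case=> p [/andP[pup _] <- _]; apply/connectP; exists p.
have g_ranked u v : g u v -> #|connect a v| < #|connect a u| \/ g v u.
  move=> guv; have cuv := g_connect u v guv.
  have [|cvu] := card_connect_lt_or_connect cuv; [by left | right].
  have [<-|uv] := eqVneq u v; first by exists [::]; split=> //; rewrite /hlen_open; lia.
  have [c [dc uc vc]] := dcycle_through a_irr a_lot uv cuv cvu.
  have [p [dp lp hp]] := dcycle_hpath cycB dc uc vc uv.
  by exists p; split=> //; lia.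
have [S [S_indep S_abs]] := ranked_kernel g_ranked.
exists S; split=> [u v uS vS uv p dp lp | x xNS].
  rewrite leqNgt; apply/negP => hp; apply: (S_indep u v uS vS uv).
  by exists p; split=> //; lia.
by have [y yS [p [dp lp hp]]] := S_abs x xNS; exists p; rewrite lp.
Qed.
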